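(* Let $\mathscr V$ be a braided monoidal category with braiding $c$. The following are equivalent: (1) $\mathscr V$ is symmetric, i.e. $c_{X',X}\circ c_{X,X'}=1$ for all $X,X'$; (2) for every left $\mathscr V$-graded category $\mathscr C$ and every $\mathrm V$-graded square $(f,g,\varphi,\varphi')$ in $\mathscr C$, the quadruple $(\varphi,\varphi',f,g)$ is also a $\mathrm V$-graded square in $\mathscr C$.
   Context: $\mathscr V=(\mathscr V,\otimes,I,a,\ell,r)$ is a monoidal category with braiding $c_{X,Y}\colon X\otimes Y\to Y\otimes X$. A left $\mathscr V$-graded category $\mathscr C$ has a set of objects, sets $\mathscr C_X(A,B)$ of graded morphisms of grade $X\in\mathscr V$, reindexings $\alpha^*f\in\mathscr C_Y(A,B)$ along $\alpha\colon Y\to X$, composites $g\circ f\in\mathscr C_{Y\otimes X}(A,C)$ for $f\in\mathscr C_X(A,B)$, $g\in\mathscr C_Y(B,C)$, identities $\mathsf i_A\in\mathscr C_I(A,A)$, with functorial reindexing, $\beta^*g\circ\alpha^*f=(\beta\otimes\alpha)^*(g\circ f)$, $(h\circ g)\circ f=a^*(h\circ(g\circ f))$, $f\circ\mathsf i_A=r_X^*f$, $\mathsf i_B\circ f=\ell_X^*f$. (E.g. $\mathscr V$ itself with $\mathscr V_X(A,B)=\mathscr V(X\otimes A,B)$.) For braided $\mathscr V$, a $\mathrm V$-graded square in $\mathscr C$ is a quadruple $(f,g,\varphi,\varphi')$ with $f\in\mathscr C_X(A,A')$, $g\in\mathscr C_X(B,B')$, $\varphi\in\mathscr C_{X'}(A,B)$,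 $\varphi'\in\mathscr C_{X'}(A',B')$ (for some $X,X'$) such that $g\circ\varphi=c_{X,X'}^*(\varphi'\circ f)$ in $\mathscr C_{X\otimes X'}(A,B')$. *)

(* Equality of morphisms is Leibniz. *)

Set Implicit Arguments.
Unset Strict Implicit.

Record Category := {
  ob :> Type;
  hom : ob -> ob -> Type;
  comp : forall {A B D : ob}, hom B D -> hom A B -> hom A D;
  idm : forall A : ob, hom A A;
  comp_assoc : forall A B D E (h : hom D E) (g : hom B D) (f : hom A B),
      comp h (comp g f) = comp (comp h g) f;
  comp_id_l : forall A B (f : hom A B), comp (idm B) f = f;
  comp_id_r : forall A B (f : hom A B), comp f (idm A) = f
}.
Arguments hom {c} _ _.
Arguments comp {c A B D} _ _.
Arguments idm {c} A.

Record Monoidal (V : Category) := {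
  tens : V -> V -> V;
  tensm : forall {X X' Y Y' : V}, hom X X' -> hom Y Y' -> hom (tens X Y) (tens X' Y');
  unit_ob : V;
  tensm_id : forall X Y : V, tensm (idm X) (idm Y) = idm (tens X Y);
  tensm_comp : forall X X' X'' Y Y' Y'' (f : hom X X') (f' : hom X' X'')
      (g : hom Y Y') (g' : hom Y' Y''),
      tensm (comp f' f) (comp g' g) = comp (tensm f' g') (tensm f g);
  assoc : forall X Y Z : V, hom (tens (tens X Y) Z) (tens X (tens Y Z));
  assoc_inv : forall X Y Z : V, hom (tens X (tens Y Z)) (tens (tens X Y) Z);
  assoc_iso1 : forall X Y Z, comp (assoc_inv X Y Z) (assoc X Y Z) = idm _;
  assoc_iso2 : forall X Y Z, comp (assoc X Y Z) (assoc_inv X Y Z) = idm _;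
  assoc_nat : forall X X' Y Y' Z Z' (f : hom X X') (g : hom Y Y') (h : hom Z Z'),
      comp (assoc X' Y' Z') (tensm (tensm f g) h)
      = comp (tensm f (tensm g h)) (assoc X Y Z);
  lunit : forall X : V, hom (tens unit_ob X) X;
  lunit_inv : forall X : V, hom X (tens unit_ob X);
  lunit_iso1 : forall X, comp (lunit_inv X) (lunit X) = idm _;
  lunit_iso2 : forall X, comp (lunit X) (lunit_inv X) = idm _;
  lunit_nat : forall X Y (f : hom X Y),
      comp (lunit Y) (tensm (idm unit_ob) f) = comp f (lunit X);
  runit : forall X : V, hom (tens X unit_ob) X;
  runit_inv : forall X : V, hom X (tens X unit_ob);
  runit_iso1 : forall X, comp (runit_inv X) (runit X) = idm _;
  runit_iso2 : forall X, comp (runit X) (runit_inv X) = idm _;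
  runit_nat : forall X Y (f : hom X Y),
      comp (runit Y) (tensm f (idm unit_ob)) = comp f (runit X);
  pentagon : forall W X Y Z : V,
      comp (assoc W X (tens Y Z)) (assoc (tens W X) Y Z)
      = comp (tensm (idm W) (assoc X Y Z))
             (comp (assoc W (tens X Y) Z) (tensm (assoc W X Y) (idm Z)));
  triangle : forall X Y : V,
      comp (tensm (idm X) (lunit Y)) (assoc X unit_ob Y)
      = tensm (runit X) (idm Y)
}.
Arguments tens {V} m _ _.
Arguments tensm {V} m {X X' Y Y'} _ _.
Arguments unit_ob {V} m.
Arguments assoc {V} m X Y Z.
Arguments assoc_inv {V} m X Y Z.
Arguments lunit {V} m X.
Arguments runit {V} m X.

Record Braiding (V : Category) (M : Monoidal V) := {
  braid : forall X Y : V, hom (tens M X Y) (tens M Y X);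
  braid_inv : forall X Y : V, hom (tens M Y X) (tens M X Y);
  braid_iso1 : forall X Y, comp (braid_inv X Y) (braid X Y) = idm _;
  braid_iso2 : forall X Y, comp (braid X Y) (braid_inv X Y) = idm _;
  braid_nat : forall X X' Y Y' (f : hom X X') (g : hom Y Y'),
      comp (braid X' Y') (tensm M f g) = comp (tensm M g f) (braid X Y);
  hexagon1 : forall X Y Z : V,
      comp (assoc M Y Z X) (comp (braid X (tens M Y Z)) (assoc M X Y Z))
      = comp (tensm M (idm Y) (braid X Z))
             (comp (assoc M Y X Z) (tensm M (braid X Y) (idm Z)));
  hexagon2 : forall X Y Z : V,
      comp (assoc_inv M Z X Y) (comp (braid (tens M X Y) Z) (assoc_inv M X Y Z))
      = comp (tensm M (braid X Z) (idm Y))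
             (comp (assoc_inv M X Z Y) (tensm M (idm X) (braid Y Z)))
}.
Arguments braid {V M} b X Y.

Definition symmetric (V : Category) (M : Monoidal V) (c : Braiding M) : Prop :=
  forall X X' : V, comp (braid c X' X) (braid c X X') = idm (tens M X X').

Record GradedCat (V : Category) (M : Monoidal V) := {
  gob : Type;
  ghom : V -> gob -> gob -> Type;
  reidx : forall {X Y : V} {A B : gob}, hom Y X -> ghom X A B -> ghom Y A B;
  gcomp : forall {X Y : V} {A B D : gob},
      ghom Y B D -> ghom X A B -> ghom (tens M Y X) A D;
  gid : forall A : gob, ghom (unit_ob M) A A;
  reidx_id : forall X A B (f : ghom X A B), reidx (idm X) f = f;
  reidx_comp : forall X Y Z A B (a : hom Y X) (b : hom Z Y) (f : ghom X A B),
      reidx (comp a b) f = reidx b (reidx a f);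
  reidx_gcomp : forall X X' Y Y' A B D (a : hom X' X) (b : hom Y' Y)
      (f : ghom X A B) (g : ghom Y B D),
      gcomp (reidx b g) (reidx a f) = reidx (tensm M b a) (gcomp g f);
  gcomp_assoc : forall X Y Z A B D E (f : ghom X A B) (g : ghom Y B D) (h : ghom Z D E),
      gcomp (gcomp h g) f = reidx (assoc M Z Y X) (gcomp h (gcomp g f));
  gcomp_id_r : forall X A B (f : ghom X A B), gcomp f (gid A) = reidx (runit M X) f;
  gcomp_id_l : forall X A B (f : ghom X A B), gcomp (gid B) f = reidx (lunit M X) f
}.
Arguments gob {V M} _.
Arguments ghom {V M} _ X A B.
Arguments reidx {V M} _ {X Y A B} _ _.
Arguments gcomp {V M} _ {X Y A B D} _ _.

Definition graded_square (V : Category) (M : Monoidal V) (c : Braiding M)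
    (C : GradedCat M) (X X' : V) (A A' B B' : gob C)
    (f : ghom C X A A') (g : ghom C X B B')
    (phi : ghom C X' A B) (phi' : ghom C X' A' B') : Prop :=
  gcomp C g phi = reidx C (braid c X X') (gcomp C phi' f).

(** Symmetry gives the swapped square at once: reindexing the square along
    [c_{X',X}] turns [c_{X,X'}^*] into [c_{X',X} ∘ c_{X,X'} = 1].  Conversely,
    grade [V] over itself and take the universal elements
    [1_{X⊗A} ∈ V_X(A, X⊗A)]: for these, composition is the associator and
    reindexing is whiskering, so there is a square whose fourth side is the
    conjugate of [c_{P,Q} ⊗ 1_A] by associators.  Its swap says
    [(c_{P,Q} ∘ c_{Q,P}) ⊗ 1_A = 1], and for [A = I] the right unitor removes
    the whiskering. *)


Lemma comp_cancel_iso_r {C : Category} {A B D : C} {h : hom A B} {k : hom B A}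
    {u v : hom B D} :
  comp h k = idm B -> comp u h = comp v h -> u = v.
Proof.
  intros hk E.
  rewrite <- (comp_id_r u), <- (comp_id_r v), <- hk, !comp_assoc, E.
  reflexivity.
Qed.

Section MonoidalFacts.
Context {V : Category} (M : Monoidal V).

Lemma tensm_comp_idl (X X' X'' Y : V) (f : hom X X') (f' : hom X' X'') :
  tensm M (comp f' f) (idm Y) = comp (tensm M f' (idm Y)) (tensm M f (idm Y)).
Proof. rewrite <- tensm_comp, comp_id_l. reflexivity. Qed.

Lemma tensm_comp_idr (X Y Y' Y'' : V) (g : hom Y Y') (g' : hom Y' Y'') :
  tensm M (idm X) (comp g' g) = comp (tensm M (idm X) g') (tensm M (idm X) g).
Proof. rewrite <- tensm_comp, comp_id_l. reflexivity. Qed.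

Lemma tensm_idl_inj (X Y : V) (f g : hom X Y) :
  tensm M (idm (unit_ob M)) f = tensm M (idm (unit_ob M)) g -> f = g.
Proof.
  intro E.
  assert (conj_lunit : forall h : hom X Y,
    h = comp (lunit M Y) (comp (tensm M (idm (unit_ob M)) h) (lunit_inv M X))).
  { intro h. rewrite comp_assoc, lunit_nat, <- comp_assoc, lunit_iso2, comp_id_r.
    reflexivity. }
  rewrite (conj_lunit f), (conj_lunit g), E. reflexivity.
Qed.

Lemma tensm_idr_inj (X Y : V) (f g : hom X Y) :
  tensm M f (idm (unit_ob M)) = tensm M g (idm (unit_ob M)) -> f = g.
Proof.
  intro E.
  assert (conj_runit : forall h : hom X Y,
    h = comp (runit M Y) (comp (tensm M h (idm (unit_ob M))) (runit_inv M X))).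
  { intro h. rewrite comp_assoc, runit_nat, <- comp_assoc, runit_iso2, comp_id_r.
    reflexivity. }
  rewrite (conj_runit f), (conj_runit g), E. reflexivity.
Qed.

(* Kelly's lemma [l_{X⊗Y} ∘ a_{I,X,Y} = l_X ⊗ 1_Y]: after whiskering by [I] on
   the left and precomposing with the iso [a_{I,I⊗X,Y} ∘ (a_{I,I,X} ⊗ 1)], both
   sides are identified by the pentagon, the triangle and naturality of [a]. *)
Lemma lunit_tens_assoc (X Y : V) :
  comp (lunit M (tens M X Y)) (assoc M (unit_ob M) X Y)
  = tensm M (lunit M X) (idm Y).
Proof.
  set (I := unit_ob M).
  apply tensm_idl_inj.
  set (P := comp (assoc M I (tens M I X) Y) (tensm M (assoc M I I X) (idm Y))).
  set (Q := comp (tensm M (assoc_inv M I I X) (idm Y)) (assoc_inv M I (tens M I X) Y)).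
  assert (PQ : comp P Q = idm _).
  { unfold P, Q. rewrite <- comp_assoc, (comp_assoc (tensm M _ _) (tensm M _ _)).
    rewrite <- tensm_comp, assoc_iso2, comp_id_l, tensm_id, comp_id_l, assoc_iso2.
    reflexivity. }
  apply (comp_cancel_iso_r PQ). unfold P.
  rewrite tensm_comp_idr, <- comp_assoc, <- pentagon.
  rewrite comp_assoc, triangle, <- tensm_id, <- assoc_nat.
  rewrite <- triangle, tensm_comp_idl, comp_assoc, assoc_nat, <- comp_assoc.
  reflexivity.
Qed.

End MonoidalFacts.

Section SelfGrading.
Context {V : Category} (M : Monoidal V).

Definition self_reidx {X Y A B : V} (a : hom Y X) (f : hom (tens M X A) B) :
    hom (tens M Y A) B :=
  comp f (tensm M a (idm A)).

Definition self_gcomp {X Y A B D : V} (g : hom (tens M Y B) D)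
    (f : hom (tens M X A) B) : hom (tens M (tens M Y X) A) D :=
  comp g (comp (tensm M (idm Y) f) (assoc M Y X A)).

Lemma self_reidx_id (X A B : V) (f : hom (tens M X A) B) :
  self_reidx (idm X) f = f.
Proof. unfold self_reidx. rewrite tensm_id, comp_id_r. reflexivity. Qed.

Lemma self_reidx_comp (X Y Z A B : V) (a : hom Y X) (b : hom Z Y)
    (f : hom (tens M X A) B) :
  self_reidx (comp a b) f = self_reidx b (self_reidx a f).
Proof. unfold self_reidx. rewrite tensm_comp_idl, comp_assoc. reflexivity. Qed.

Lemma self_reidx_gcomp (X X' Y Y' A B D : V) (a : hom X' X) (b : hom Y' Y)
    (f : hom (tens M X A) B) (g : hom (tens M Y B) D) :
  self_gcomp (self_reidx b g) (self_reidx a f)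
  = self_reidx (tensm M b a) (self_gcomp g f).
Proof.
  unfold self_reidx, self_gcomp.
  rewrite <- comp_assoc, (comp_assoc (tensm M _ _) (tensm M _ _)), <- tensm_comp,
    comp_id_r, comp_id_l.
  replace (tensm M b (comp f (tensm M a (idm A))))
    with (comp (tensm M (idm Y) f) (tensm M b (tensm M a (idm A))))
    by (rewrite <- tensm_comp, comp_id_l; reflexivity).
  rewrite <- comp_assoc, <- assoc_nat, !comp_assoc. reflexivity.
Qed.

Lemma self_gcomp_assoc (X Y Z A B D E : V) (f : hom (tens M X A) B)
    (g : hom (tens M Y B) D) (h : hom (tens M Z D) E) :
  self_gcomp (self_gcomp h g) f
  = self_reidx (assoc M Z Y X) (self_gcomp h (self_gcomp g f)).
Proof.
  unfold self_reidx, self_gcomp.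
  rewrite <- tensm_id, <- !comp_assoc.
  rewrite (comp_assoc (assoc M Z Y B)), assoc_nat, <- !comp_assoc, pentagon.
  rewrite !tensm_comp_idr, <- !comp_assoc. reflexivity.
Qed.

Lemma self_gcomp_id_r (X A B : V) (f : hom (tens M X A) B) :
  self_gcomp f (lunit M A) = self_reidx (runit M X) f.
Proof. unfold self_reidx, self_gcomp. rewrite triangle. reflexivity. Qed.

Lemma self_gcomp_id_l (X A B : V) (f : hom (tens M X A) B) :
  self_gcomp (lunit M B) f = self_reidx (lunit M X) f.
Proof.
  unfold self_reidx, self_gcomp.
  rewrite comp_assoc, lunit_nat, <- comp_assoc, lunit_tens_assoc. reflexivity.
Qed.

Definition self_graded : GradedCat M :=
  @Build_GradedCat V M V (fun X A B => hom (tens M X A) B)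
    (@self_reidx) (@self_gcomp) (lunit M) self_reidx_id self_reidx_comp self_reidx_gcomp
    self_gcomp_assoc self_gcomp_id_r self_gcomp_id_l.

Definition self_univ (X A : V) : ghom self_graded X A (tens M X A) :=
  idm (tens M X A).

Lemma self_gcomp_univ (X Y A D : V) (g : ghom self_graded Y (tens M X A) D) :
  gcomp self_graded g (self_univ X A) = comp g (assoc M Y X A).
Proof.
  cbn; unfold self_gcomp, self_univ.
  rewrite tensm_id, comp_id_l. reflexivity.
Qed.

End SelfGrading.

Section BraidedSquares.
Context {V : Category} {M : Monoidal V} (c : Braiding M).

Lemma graded_square_swap_of_symmetric :
  symmetric c ->
  forall (C : GradedCat M) (X X' : V) (A A' B B' : gob C)
         (f : ghom C X A A') (g : ghom C X B B')
         (phi : ghom C X' A B) (phi' : ghom C X' A' B'),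
    graded_square c f g phi phi' -> graded_square c phi phi' f g.
Proof.
  intros symm C X X' A A' B B' f g phi phi' sq. unfold graded_square in *.
  rewrite sq, <- reidx_comp, symm, reidx_id. reflexivity.
Qed.

Definition braid_assoc_conj (P Q A : V) :
    ghom (self_graded M) P (tens M Q A) (tens M Q (tens M P A)) :=
  comp (assoc M Q P A)
       (comp (tensm M (braid c P Q) (idm A)) (assoc_inv M P Q A)).

Lemma braid_assoc_conj_square (P Q A : V) :
  graded_square c (self_univ M P A) (braid_assoc_conj P Q A)
                  (self_univ M Q A) (self_univ M Q (tens M P A)).
Proof.
  unfold graded_square. rewrite !self_gcomp_univ.
  cbn; unfold self_reidx, self_univ, braid_assoc_conj.
  rewrite comp_id_l, <- !comp_assoc, assoc_iso1, comp_id_r. reflexivity.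
Qed.

Lemma braid_assoc_conj_square_swap (P Q A : V) :
  graded_square c (self_univ M Q A) (self_univ M Q (tens M P A))
                  (self_univ M P A) (braid_assoc_conj P Q A) ->
  tensm M (comp (braid c P Q) (braid c Q P)) (idm A) = idm (tens M (tens M Q P) A).
Proof.
  unfold graded_square. rewrite !self_gcomp_univ.
  cbn; unfold self_reidx, self_univ, braid_assoc_conj.
  rewrite comp_id_l, <- !comp_assoc, (comp_assoc (assoc_inv M P Q A)), assoc_iso1,
    comp_id_l, <- tensm_comp, comp_id_l.
  intro sq.
  apply (f_equal (comp (assoc_inv M Q P A))) in sq.
  rewrite comp_assoc, assoc_iso1, comp_id_l in sq.
  symmetry. exact sq.
Qed.

End BraidedSquares.

Theorem proposition13p5 (V : Category) (M : Monoidal V) (c : Braiding M) :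
  symmetric c <->
  (forall (C : GradedCat M) (X X' : V) (A A' B B' : gob C)
          (f : ghom C X A A') (g : ghom C X B B')
          (phi : ghom C X' A B) (phi' : ghom C X' A' B'),
      graded_square c f g phi phi' -> graded_square c phi phi' f g).
Proof.
  split.
  - apply graded_square_swap_of_symmetric.
  - intros swap Q P.
    apply (tensm_idr_inj M).
    rewrite tensm_id.
    apply braid_assoc_conj_square_swap, swap, braid_assoc_conj_square.
Qed.
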